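(* Let $J\subseteq\mathbb{R}$ be an open interval and let $\gamma:J\to{\rm AdS}$ be a null curve satisfying the standing assumptions below, with bending $\kappa$ and spinor frame field $(F_+,F_-)$. Then the first column vectors $\eta_+$ of $F_+$ and $\eta_-$ of $F_-$ are star-shaped curves $J\to\dot{\mathbb{R}}^2$, parametrized by central affine arc length, with canonical central affine frame fields $F_+$ and $F_-$ and central affine curvatures $$\mathrm{k}_+=\kappa+1,\qquad \mathrm{k}_-=\kappa-1;$$ in particular $(\eta_+,\eta_-)$ is a pair of cousins. Conversely, let $(\eta_+,\eta_-)$ be a pair of cousins $J\to\dot{\mathbb{R}}^2$ with central affine curvatures $\mathrm{k}_\pm$ and canonical central affine frame fields $F_\pm=(\eta_\pm,\eta_\pm')$. Then $\gamma=F_+F_-^{-1}:J\to{\rm AdS}$ is a null curve, parametrized by proper time and without inflection points, with bending $\kappa=(\mathrm{k}_++\mathrm{k}_-)/2$ and with $(F_+,F_-)$ a spinor frame field along it.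
   Context: Let $\mathbb{R}^{2,2}$ be the space of real $2\times2$ matrices with the quadratic form $q(X)=-\det X$ and its polarization $\langle\cdot,\cdot\rangle$ (signature $(2,2)$). The anti-de Sitter 3-space ${\rm AdS}$ is ${\rm SL}(2,\mathbb{R})\subset\mathbb{R}^{2,2}$ with the induced Lorentzian metric. A smooth immersed curve $\gamma:J\to{\rm AdS}$ is null if $\langle\gamma',\gamma'\rangle=0$. Standing assumptions on null curves: $\gamma$ is future-directed (i.e. $\det\begin{pmatrix}\langle U,\gamma\rangle&\langle U,\gamma'\rangle\\ \langle V,\gamma\rangle&\langle V,\gamma'\rangle\end{pmatrix}>0$ with $U=I_2$, $V=\begin{pmatrix}0&1\\-1&0\end{pmatrix}$), has no inflection points ($\gamma'\wedge\gamma''\neq0$), and is parametrized by proper time, i.e. $\langle\gamma'',\gamma''\rangle=4$. The bending is $\kappa=-\frac1{16}\langle\gamma''',\gamma'''\rangle$. Put $T=\gamma'/\sqrt2$, $N=\gamma''/2$, $B=\frac{1}{\sqrt2}\kappa\gamma'-\frac{1}{2\sqrt2}\gamma'''$ and let $P_1=\begin{pmatrix}1&0\\0&1\end{pmatrix}$, $P_2=\begin{pmatrix}0&\sqrt2\\0&0\end{pmatrix}$, $P_3=\begin{pmatrix}-1&0\\0&1\end{pmatrix}$, $P_4=\begin{pmatrix}0&0\\\sqrt2&0\end{pmatrix}$. It is further assumed (normalization on orientation) that there is a smooth map $(F_+,F_-):J\to{\rm SL}(2,\mathbb{R})\times{\rm SL}(2,\mathbb{R})$ with $\gamma=F_+F_-^{-1}$,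 $T=F_+P_2F_-^{-1}$, $N=F_+P_3F_-^{-1}$, $B=F_+P_4F_-^{-1}$; this is called a spinor frame field along $\gamma$ (unique up to overall sign). Star-shaped curves: $\dot{\mathbb{R}}^2=\mathbb{R}^2\setminus\{0\}$. A smooth curve $\eta:J\to\dot{\mathbb{R}}^2$ is star-shaped if $\det(\eta,\eta')\neq0$; it is parametrized by central affine arc length if $\det(\eta,\eta')=1$; its central affine curvature is $\mathrm{k}=-\det(\eta',\eta'')$ and its canonical central affine frame field is the ${\rm SL}(2,\mathbb{R})$-valued map $F=(\eta,\eta')$ (columns $\eta,\eta'$). A pair of star-shaped curves $(\eta,\bar\eta)$ parametrized by central affine arc length is a pair of cousins if their curvatures satisfy $(\mathrm{k}-\bar{\mathrm{k}})/2=1$. *)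

From Stdlib Require Import Reals.
From Coquelicot Require Import Coquelicot.
Open Scope R_scope.

Record Mat2 := mkM { m11 : R; m12 : R; m21 : R; m22 : R }.

Definition mzero : Mat2 := mkM 0 0 0 0.
Definition madd (X Y : Mat2) : Mat2 :=
  mkM (m11 X + m11 Y) (m12 X + m12 Y) (m21 X + m21 Y) (m22 X + m22 Y).
Definition mscal (c : R) (X : Mat2) : Mat2 :=
  mkM (c * m11 X) (c * m12 X) (c * m21 X) (c * m22 X).
Definition mmul (X Y : Mat2) : Mat2 :=
  mkM (m11 X * m11 Y + m12 X * m21 Y) (m11 X * m12 Y + m12 X * m22 Y)
      (m21 X * m11 Y + m22 X * m21 Y) (m21 X * m12 Y + m22 X * m22 Y).
Definition mdet (X : Mat2) : R := m11 X * m22 X - m12 X * m21 X.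
Definition madj (X : Mat2) : Mat2 := mkM (m22 X) (- m12 X) (- m21 X) (m11 X).
Definition minv (X : Mat2) : Mat2 := mscal (/ mdet X) (madj X).

Definition qform (X : Mat2) : R := - mdet X.
Definition ip (X Y : Mat2) : R := (qform (madd X Y) - qform X - qform Y) / 2.

Definition Umat : Mat2 := mkM 1 0 0 1.
Definition Vmat : Mat2 := mkM 0 1 (-1) 0.
Definition P1 : Mat2 := mkM 1 0 0 1.
Definition P2 : Mat2 := mkM 0 (sqrt 2) 0 0.
Definition P3 : Mat2 := mkM (-1) 0 0 1.
Definition P4 : Mat2 := mkM 0 0 (sqrt 2) 0.

Definition in_AdS (X : Mat2) : Prop := mdet X = 1.

Definition in_interval (a b : Rbar) (t : R) : Prop := Rbar_lt a t /\ Rbar_lt t b.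

Definition smooth_on (J : R -> Prop) (f : R -> R) : Prop :=
  forall (n : nat) (t : R), J t -> ex_derive_n f n t.

Definition msmooth_on (J : R -> Prop) (g : R -> Mat2) : Prop :=
  smooth_on J (fun s => m11 (g s)) /\ smooth_on J (fun s => m12 (g s)) /\
  smooth_on J (fun s => m21 (g s)) /\ smooth_on J (fun s => m22 (g s)).

Definition md (g : R -> Mat2) : R -> Mat2 := fun t =>
  mkM (Derive (fun s => m11 (g s)) t) (Derive (fun s => m12 (g s)) t)
      (Derive (fun s => m21 (g s)) t) (Derive (fun s => m22 (g s)) t).

Definition null_curve (J : R -> Prop) (g : R -> Mat2) : Prop :=
  msmooth_on J g /\
  forall t, J t -> in_AdS (g t) /\ md g t <> mzero /\ ip (md g t) (md g t) = 0.

Definition future_directed (J : R -> Prop) (g : R -> Mat2) : Prop :=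
  forall t, J t ->
    ip Umat (g t) * ip Vmat (md g t) - ip Umat (md g t) * ip Vmat (g t) > 0.

(** gamma' /\ gamma'' <> 0, i.e. gamma', gamma'' linearly independent *)
Definition no_inflection (J : R -> Prop) (g : R -> Mat2) : Prop :=
  forall t, J t -> forall x y : R,
    madd (mscal x (md g t)) (mscal y (md (md g) t)) = mzero -> x = 0 /\ y = 0.

Definition proper_time (J : R -> Prop) (g : R -> Mat2) : Prop :=
  forall t, J t -> ip (md (md g) t) (md (md g) t) = 4.

Definition std_null_curve (J : R -> Prop) (g : R -> Mat2) : Prop :=
  null_curve J g /\ future_directed J g /\ no_inflection J g /\ proper_time J g.

Definition bending (g : R -> Mat2) (t : R) : R :=
  - (1 / 16) * ip (md (md (md g)) t) (md (md (md g)) t).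

Definition Tvec (g : R -> Mat2) (t : R) : Mat2 := mscal (/ sqrt 2) (md g t).
Definition Nvec (g : R -> Mat2) (t : R) : Mat2 := mscal (/ 2) (md (md g) t).
Definition Bvec (g : R -> Mat2) (t : R) : Mat2 :=
  madd (mscal (/ sqrt 2 * bending g t) (md g t))
       (mscal (- / (2 * sqrt 2)) (md (md (md g)) t)).

Definition spinor_frame (J : R -> Prop) (g Fp Fm : R -> Mat2) : Prop :=
  msmooth_on J Fp /\ msmooth_on J Fm /\
  forall t, J t ->
    in_AdS (Fp t) /\ in_AdS (Fm t) /\
    g t = mmul (Fp t) (minv (Fm t)) /\
    Tvec g t = mmul (mmul (Fp t) P2) (minv (Fm t)) /\
    Nvec g t = mmul (mmul (Fp t) P3) (minv (Fm t)) /\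
    Bvec g t = mmul (mmul (Fp t) P4) (minv (Fm t)).

Definition vdet (u v : R * R) : R := fst u * snd v - snd u * fst v.

Definition vd (eta : R -> R * R) : R -> R * R := fun t =>
  (Derive (fun s => fst (eta s)) t, Derive (fun s => snd (eta s)) t).

Definition vsmooth_on (J : R -> Prop) (eta : R -> R * R) : Prop :=
  smooth_on J (fun s => fst (eta s)) /\ smooth_on J (fun s => snd (eta s)).

Definition star_shaped (J : R -> Prop) (eta : R -> R * R) : Prop :=
  vsmooth_on J eta /\
  forall t, J t -> eta t <> (0, 0) /\ vdet (eta t) (vd eta t) <> 0.

Definition ca_arclength (J : R -> Prop) (eta : R -> R * R) : Prop :=
  forall t, J t -> vdet (eta t) (vd eta t) = 1.

Definition ca_curv (eta : R -> R * R) (t : R) : R :=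
  - vdet (vd eta t) (vd (vd eta) t).

Definition ca_frame (eta : R -> R * R) (t : R) : Mat2 :=
  mkM (fst (eta t)) (fst (vd eta t)) (snd (eta t)) (snd (vd eta t)).

Definition col1 (F : Mat2) : R * R := (m11 F, m21 F).

Definition cousins (J : R -> Prop) (eta etab : R -> R * R) : Prop :=
  star_shaped J eta /\ star_shaped J etab /\
  ca_arclength J eta /\ ca_arclength J etab /\
  forall t, J t -> (ca_curv eta t - ca_curv etab t) / 2 = 1.

From Stdlib Require Import Reals Lra Lia.
From Coquelicot Require Import Coquelicot.
Open Scope R_scope.

(* Write [gamma = Fp Fm^-1].  If [Fp' = Fp A] and [Fm' = Fm B] with [A], [B] traceless, then
   [gamma^(i) = Fp C_i Fm^-1] with [C_0 = 1] and [C_(i+1) = A C_i + C_i adj(B)].  The spinor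
   frame equations say exactly that [C_1], [C_2], [C_3] are fixed matrices (the last one
   depending on the bending [kappa]), and this linear system has the unique solution
   [A = [[0, kappa+1], [1, 0]]], [B = [[0, kappa-1], [1, 0]]].  These are the structure
   equations [F' = F [[0, k], [1, 0]]] of the frames [F = (eta, eta')] of curves parametrized
   by central affine arc length with curvature [k], read in both directions. *)

Lemma open_in_interval (a b : Rbar) : open (in_interval a b).
Proof.
  intros t Ht. apply (@open_and R_UniformSpace (fun u => Rbar_lt a u) (fun u => Rbar_lt u b)).
  - apply open_Rbar_gt.
  - apply open_Rbar_lt.
  - exact Ht.
Qed.

Lemma Derive_n_Derive (f : R -> R) (n : nat) (t : R) :
  Derive_n (Derive f) n t = Derive_n f (S n) t.
Proof. rewrite <- Nat.add_1_r. exact (Derive_n_comp f n 1 t). Qed.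

Section SmoothOnOpen.

Variable J : R -> Prop.
Hypothesis J_open : open J.

Lemma locally_of_open (P : R -> Prop) (t : R) :
  (forall s, J s -> P s) -> J t -> locally t P.
Proof. intros HP Ht. exact (filter_imp J P HP (J_open t Ht)). Qed.

Lemma smooth_on_ext (f g : R -> R) :
  (forall s, J s -> f s = g s) -> smooth_on J f -> smooth_on J g.
Proof.
  intros Hfg Hf n t Ht. apply (ex_derive_n_ext_loc f); [|exact (Hf n t Ht)].
  exact (locally_of_open _ t Hfg Ht).
Qed.

Lemma smooth_on_ex_derive (f : R -> R) (t : R) : smooth_on J f -> J t -> ex_derive f t.
Proof. intros Hf Ht. exact (Hf 1%nat t Ht). Qed.

Lemma smooth_on_Derive (f : R -> R) : smooth_on J f -> smooth_on J (Derive f).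
Proof.
  intros Hf [|n] t Ht; [exact I|].
  apply (ex_derive_ext (Derive_n f (S n))); [|exact (Hf (S (S n)) t Ht)].
  intros s. symmetry. apply Derive_n_Derive.
Qed.

Lemma smooth_on_opp (f : R -> R) : smooth_on J f -> smooth_on J (fun s => - f s).
Proof. intros Hf n t Ht. apply ex_derive_n_opp, Hf, Ht. Qed.

Lemma smooth_on_plus (f g : R -> R) :
  smooth_on J f -> smooth_on J g -> smooth_on J (fun s => f s + g s).
Proof.
  intros Hf Hg n t Ht. apply ex_derive_n_plus; apply (locally_of_open _ t); auto.
Qed.

Lemma smooth_on_mult (f g : R -> R) :
  smooth_on J f -> smooth_on J g -> smooth_on J (fun s => f s * g s).
Proof.
  intros Hf Hg n. revert f g Hf Hg.
  induction n as [n IH] using (well_founded_induction Wf_nat.lt_wf).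
  intros f g Hf Hg t Ht.
  destruct n as [|[|n]]; [exact I| |].
  - apply ex_derive_mult; eapply smooth_on_ex_derive; eauto.
  - assert (Leibniz : ex_derive_n (Derive (fun s => f s * g s)) (S n) t).
    { apply (ex_derive_n_ext_loc (fun s => Derive f s * g s + f s * Derive g s)).
      - apply (locally_of_open _ t); [|exact Ht]. intros s Hs. symmetry.
        apply Derive_mult; eapply smooth_on_ex_derive; eauto.
      - apply ex_derive_n_plus; apply (locally_of_open _ t); auto; intros s Hs k Hk;
          apply (IH k); auto using smooth_on_Derive; lia. }
    apply (ex_derive_ext (Derive_n (Derive (fun s => f s * g s)) n)); [|exact Leibniz].
    intros s. apply Derive_n_Derive.
Qed.

End SmoothOnOpen.

Lemma Mat2_eq (X Y : Mat2) :
  m11 X = m11 Y -> m12 X = m12 Y -> m21 X = m21 Y -> m22 X = m22 Y -> X = Y.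
Proof. destruct X, Y; simpl; intros; subst; reflexivity. Qed.

Ltac mat2_ring := apply Mat2_eq; simpl; ring.

Definition mtrace (X : Mat2) : R := m11 X + m22 X.

Lemma mdet_mmul (X Y : Mat2) : mdet (mmul X Y) = mdet X * mdet Y.
Proof. unfold mdet, mmul; simpl; ring. Qed.

Lemma mdet_madj (X : Mat2) : mdet (madj X) = mdet X.
Proof. unfold mdet, madj; simpl; ring. Qed.

Lemma mmul_Umat_r (X : Mat2) : mmul X Umat = X.
Proof. mat2_ring. Qed.

Lemma mmul_madj_l (X : Mat2) : mmul (madj X) X = mscal (mdet X) Umat.
Proof. unfold mdet; mat2_ring. Qed.

Lemma mmul_madj_r (X : Mat2) : mmul X (madj X) = mscal (mdet X) Umat.
Proof. unfold mdet; mat2_ring. Qed.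

Lemma mscal_1 (X : Mat2) : mscal 1 X = X.
Proof. mat2_ring. Qed.

Lemma minv_SL2 (X : Mat2) : mdet X = 1 -> minv X = madj X.
Proof. intros HX. unfold minv. rewrite HX, Rinv_1. apply mscal_1. Qed.

Lemma ip_self (X : Mat2) : ip X X = - mdet X.
Proof. unfold ip, qform, mdet, madd; simpl; field. Qed.

Lemma mscal_inj (c : R) (X Y : Mat2) : c <> 0 -> mscal c X = mscal c Y -> X = Y.
Proof.
  intros Hc E. destruct X, Y. injection E; intros.
  apply Mat2_eq; simpl; apply (Rmult_eq_reg_l c); auto.
Qed.

Lemma madd_cancel_l (X Y Z : Mat2) : madd X Y = madd X Z -> Y = Z.
Proof. intros E. destruct X, Y, Z. injection E; intros. apply Mat2_eq; simpl; lra. Qed.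

(* For [mdet Q = 1], [madj Q] is [Q^-1]: the double cover SL(2)xSL(2) -> SO(2,2). *)
Definition sl2_act (P Q C : Mat2) : Mat2 := mmul (mmul P C) (madj Q).

Definition inf_act (A B C : Mat2) : Mat2 := madd (mmul A C) (mmul C (madj B)).

Lemma sl2_act_madd (P Q C D : Mat2) :
  sl2_act P Q (madd C D) = madd (sl2_act P Q C) (sl2_act P Q D).
Proof. mat2_ring. Qed.

Lemma sl2_act_mscal (P Q C : Mat2) (c : R) :
  sl2_act P Q (mscal c C) = mscal c (sl2_act P Q C).
Proof. mat2_ring. Qed.

Lemma sl2_act_mzero (P Q : Mat2) : sl2_act P Q mzero = mzero.
Proof. mat2_ring. Qed.

Lemma mdet_sl2_act (P Q C : Mat2) : mdet (sl2_act P Q C) = mdet P * mdet C * mdet Q.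
Proof. unfold sl2_act. rewrite !mdet_mmul, mdet_madj. ring. Qed.

Lemma sl2_act_inj (P Q C D : Mat2) :
  mdet P = 1 -> mdet Q = 1 -> sl2_act P Q C = sl2_act P Q D -> C = D.
Proof.
  intros HP HQ E.
  assert (Hback : forall X, mmul (mmul (madj P) (sl2_act P Q X)) Q = X).
  { intros X. transitivity (mscal (mdet P * mdet Q) X); [unfold mdet; mat2_ring|].
    rewrite HP, HQ, Rmult_1_l. apply mscal_1. }
  rewrite <- (Hback C), <- (Hback D), E. reflexivity.
Qed.

Lemma mmul_minv_SL2 (P Q C : Mat2) : mdet Q = 1 -> mmul (mmul P C) (minv Q) = sl2_act P Q C.
Proof. intros HQ. rewrite minv_SL2 by exact HQ. reflexivity. Qed.

Definition mex_derive (F : R -> Mat2) (t : R) : Prop :=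
  ex_derive (fun s => m11 (F s)) t /\ ex_derive (fun s => m12 (F s)) t /\
  ex_derive (fun s => m21 (F s)) t /\ ex_derive (fun s => m22 (F s)) t.

Lemma mex_derive_mmul (F G : R -> Mat2) (t : R) :
  mex_derive F t -> mex_derive G t -> mex_derive (fun s => mmul (F s) (G s)) t.
Proof.
  intros (f1 & f2 & f3 & f4) (g1 & g2 & g3 & g4); unfold mmul; cbn [m11 m12 m21 m22].
  repeat split; apply (ex_derive_plus (V := R_NormedModule)); apply ex_derive_mult; auto.
Qed.

Lemma mex_derive_madj (F : R -> Mat2) (t : R) :
  mex_derive F t -> mex_derive (fun s => madj (F s)) t.
Proof.
  intros (f1 & f2 & f3 & f4); unfold madj; cbn [m11 m12 m21 m22].
  repeat split; auto; apply (ex_derive_opp (V := R_NormedModule)); auto.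
Qed.

Lemma mex_derive_const (C : Mat2) (t : R) : mex_derive (fun _ => C) t.
Proof. repeat split; apply ex_derive_const. Qed.

Lemma md_mmul (F G : R -> Mat2) (t : R) :
  mex_derive F t -> mex_derive G t ->
  md (fun s => mmul (F s) (G s)) t = madd (mmul (md F t) (G t)) (mmul (F t) (md G t)).
Proof.
  intros (f1 & f2 & f3 & f4) (g1 & g2 & g3 & g4). unfold md, mmul, madd; cbn [m11 m12 m21 m22].
  f_equal; rewrite Derive_plus by (apply ex_derive_mult; auto);
    rewrite !Derive_mult by auto; ring.
Qed.

Lemma md_madj (F : R -> Mat2) (t : R) : md (fun s => madj (F s)) t = madj (md F t).
Proof. unfold md, madj; cbn [m11 m12 m21 m22]. f_equal; apply Derive_opp. Qed.

Lemma md_const (C : Mat2) (t : R) : md (fun _ => C) t = mzero.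
Proof. unfold md, mzero. f_equal; apply Derive_const. Qed.

Lemma md_sl2_act (P Q : R -> Mat2) (A B C : Mat2) (t : R) :
  mex_derive P t -> mex_derive Q t ->
  md P t = mmul (P t) A -> md Q t = mmul (Q t) B ->
  md (fun s => sl2_act (P s) (Q s) C) t = sl2_act (P t) (Q t) (inf_act A B C).
Proof.
  intros DP DQ HP HQ. unfold sl2_act.
  rewrite (md_mmul (fun s => mmul (P s) C) (fun s => madj (Q s)))
    by auto using mex_derive_mmul, mex_derive_const, mex_derive_madj.
  rewrite (md_mmul P (fun _ => C)) by auto using mex_derive_const.
  rewrite md_const, md_madj, HP, HQ. mat2_ring.
Qed.

Section MatrixCurvesOnOpen.

Variable J : R -> Prop.
Hypothesis J_open : open J.

Lemma md_ext (F G : R -> Mat2) (t : R) :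
  (forall s, J s -> F s = G s) -> J t -> md F t = md G t.
Proof.
  intros HFG Ht. unfold md.
  f_equal; apply Derive_ext_loc; apply (locally_of_open J J_open _ t); auto;
    intros s Hs; rewrite (HFG s Hs); reflexivity.
Qed.

Lemma msmooth_on_mex_derive (F : R -> Mat2) (t : R) : msmooth_on J F -> J t -> mex_derive F t.
Proof. intros (h1 & h2 & h3 & h4) Ht. repeat split; eapply smooth_on_ex_derive; eauto. Qed.

Lemma msmooth_on_ext (F G : R -> Mat2) :
  (forall s, J s -> F s = G s) -> msmooth_on J F -> msmooth_on J G.
Proof.
  intros HFG (h1 & h2 & h3 & h4).
  repeat split; [revert h1 | revert h2 | revert h3 | revert h4];
    apply smooth_on_ext; auto; intros s Hs; rewrite (HFG s Hs); reflexivity.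
Qed.

Lemma msmooth_on_mmul (F G : R -> Mat2) :
  msmooth_on J F -> msmooth_on J G -> msmooth_on J (fun s => mmul (F s) (G s)).
Proof.
  intros (f1 & f2 & f3 & f4) (g1 & g2 & g3 & g4). unfold mmul; cbn [m11 m12 m21 m22].
  repeat split; apply smooth_on_plus; auto; apply smooth_on_mult; auto.
Qed.

Lemma msmooth_on_madj (F : R -> Mat2) : msmooth_on J F -> msmooth_on J (fun s => madj (F s)).
Proof.
  intros (f1 & f2 & f3 & f4). unfold madj; cbn [m11 m12 m21 m22].
  repeat split; auto; apply smooth_on_opp; auto.
Qed.

Definition logd (F : R -> Mat2) (t : R) : Mat2 := mmul (madj (F t)) (md F t).

Lemma md_eq_mmul_logd (F : R -> Mat2) (t : R) :
  mdet (F t) = 1 -> md F t = mmul (F t) (logd F t).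
Proof.
  intros HF. unfold logd. transitivity (mmul (mmul (F t) (madj (F t))) (md F t)).
  - rewrite mmul_madj_r, HF. mat2_ring.
  - mat2_ring.
Qed.

(* Differentiating [madj F * F = 1] gives [madj (logd F) + logd F = 0]. *)
Lemma mtrace_logd (F : R -> Mat2) (t : R) :
  msmooth_on J F -> (forall s, J s -> mdet (F s) = 1) -> J t -> mtrace (logd F t) = 0.
Proof.
  intros HF Hdet Ht.
  pose proof (msmooth_on_mex_derive F t HF Ht) as DF.
  assert (Hconst : md (fun s => mmul (madj (F s)) (F s)) t = mzero).
  { rewrite <- (md_const Umat t). apply md_ext; [|exact Ht].
    intros s Hs; cbv beta. rewrite mmul_madj_l, (Hdet s Hs). apply mscal_1. }
  rewrite md_mmul, md_madj in Hconst by auto using mex_derive_madj.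
  fold (logd F t) in Hconst.
  rewrite (md_eq_mmul_logd F t (Hdet t Ht)) in Hconst.
  apply (f_equal m11) in Hconst.
  set (L := logd F t) in *. clearbody L.
  replace (mtrace L) with (mdet (F t) * m22 L + m11 L)
    by (rewrite (Hdet t Ht); unfold mtrace; ring).
  transitivity (m11 mzero); [rewrite <- Hconst | reflexivity].
  unfold mdet; cbn [m11 m12 m21 m22 madd mmul madj]. ring.
Qed.

Lemma logd_eq (F : R -> Mat2) (A : Mat2) (t : R) :
  mdet (F t) = 1 -> md F t = mmul (F t) A -> logd F t = A.
Proof.
  intros HF E. unfold logd. rewrite E.
  transitivity (mmul (mmul (madj (F t)) (F t)) A); [mat2_ring|].
  rewrite mmul_madj_l, HF. mat2_ring.
Qed.

Lemma md_sl2_act_on (P Q g : R -> Mat2) (C : Mat2) (t : R) :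
  msmooth_on J P -> msmooth_on J Q ->
  (forall s, J s -> mdet (P s) = 1) -> (forall s, J s -> mdet (Q s) = 1) ->
  (forall s, J s -> g s = sl2_act (P s) (Q s) C) -> J t ->
  md g t = sl2_act (P t) (Q t) (inf_act (logd P t) (logd Q t) C).
Proof.
  intros HP HQ dP dQ Hg Ht.
  rewrite (md_ext g (fun s => sl2_act (P s) (Q s) C) t Hg Ht).
  apply md_sl2_act; auto using msmooth_on_mex_derive, md_eq_mmul_logd.
Qed.

End MatrixCurvesOnOpen.

Definition ca_gen (k : R) : Mat2 := mkM 0 k 1 0.

Lemma msmooth_on_ca_frame (J : R -> Prop) (eta : R -> R * R) :
  star_shaped J eta -> msmooth_on J (ca_frame eta).
Proof.
  intros [[h1 h2] _].
  repeat split;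
    [exact h1 | exact (smooth_on_Derive J _ h1) | exact h2 | exact (smooth_on_Derive J _ h2)].
Qed.

Lemma mdet_ca_frame (eta : R -> R * R) (t : R) : mdet (ca_frame eta t) = vdet (eta t) (vd eta t).
Proof. unfold mdet, ca_frame, vdet; simpl; ring. Qed.

Lemma central_affine_acceleration (x y x1 y1 x2 y2 : R) :
  x * y1 - y * x1 = 1 -> x * y2 - y * x2 = 0 ->
  x2 = - (x1 * y2 - y1 * x2) * x /\ y2 = - (x1 * y2 - y1 * x2) * y.
Proof.
  intros H1 H2. split; apply Rminus_diag_uniq.
  - transitivity (- x2 * (x * y1 - y * x1 - 1) + x1 * (x * y2 - y * x2)); [ring|].
    rewrite H1, H2. ring.
  - transitivity (- y2 * (x * y1 - y * x1 - 1) + y1 * (x * y2 - y * x2)); [ring|].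
    rewrite H1, H2. ring.
Qed.

Section CentralAffineOnOpen.

Variable J : R -> Prop.
Hypothesis J_open : open J.

(* The derivative of [det(eta, eta') = 1] is [det(eta, eta'') = 0], so [eta'' = k eta]. *)
Lemma logd_ca_frame (eta : R -> R * R) (t : R) :
  star_shaped J eta -> ca_arclength J eta -> J t ->
  logd (ca_frame eta) t = ca_gen (ca_curv eta t).
Proof.
  intros Hs Ha Ht.
  destruct Hs as [[h1 h2] _].
  set (x := fun s => fst (eta s)) in *. set (y := fun s => snd (eta s)) in *.
  assert (Hdet' : Derive (fun s => x s * Derive y s - y s * Derive x s) t = 0).
  { rewrite (Derive_ext_loc _ (fun _ => 1)); [apply Derive_const|].
    apply (locally_of_open J J_open _ t); auto. }
  assert (dx : ex_derive x t) by exact (h1 1%nat t Ht).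
  assert (dy : ex_derive y t) by exact (h2 1%nat t Ht).
  assert (dx' : ex_derive (Derive x) t) by exact (smooth_on_Derive J x h1 1%nat t Ht).
  assert (dy' : ex_derive (Derive y) t) by exact (smooth_on_Derive J y h2 1%nat t Ht).
  rewrite Derive_minus in Hdet' by (apply ex_derive_mult; assumption).
  rewrite (Derive_mult x (Derive y)), (Derive_mult y (Derive x)) in Hdet' by assumption.
  pose proof (Ha t Ht) as Hvel. unfold vdet, vd in Hvel; simpl in Hvel.
  destruct (central_affine_acceleration (x t) (y t) (Derive x t) (Derive y t)
              (Derive (Derive x) t) (Derive (Derive y) t)) as [Ex Ey];
    [exact Hvel | lra |].
  apply logd_eq.
  - rewrite mdet_ca_frame. apply Ha, Ht.
  - change (mkM (Derive x t) (Derive (Derive x) t) (Derive y t) (Derive (Derive y) t)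
            = mmul (mkM (x t) (Derive x t) (y t) (Derive y t)) (ca_gen (ca_curv eta t))).
    change (ca_curv eta t)
      with (- (Derive x t * Derive (Derive y) t - Derive y t * Derive (Derive x) t)).
    unfold mmul, ca_gen; apply Mat2_eq; cbn [m11 m12 m21 m22];
      [ring | rewrite Ex at 1; ring | ring | rewrite Ey at 1; ring].
Qed.

Lemma vd_ext (eta xi : R -> R * R) (t : R) :
  (forall s, J s -> eta s = xi s) -> J t -> vd eta t = vd xi t.
Proof.
  intros E Ht. unfold vd.
  f_equal; apply Derive_ext_loc; apply (locally_of_open J J_open _ t); auto;
    intros s Hs; rewrite (E s Hs); reflexivity.
Qed.

Lemma ca_curve_of_frame (F : R -> Mat2) (k : R -> R) :
  msmooth_on J F -> (forall s, J s -> mdet (F s) = 1) ->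
  (forall s, J s -> logd F s = ca_gen (k s)) ->
  star_shaped J (fun s => col1 (F s)) /\ ca_arclength J (fun s => col1 (F s)) /\
  (forall t, J t -> ca_frame (fun s => col1 (F s)) t = F t /\
                    ca_curv (fun s => col1 (F s)) t = k t).
Proof.
  intros HF Hdet Hlogd.
  assert (Hmd : forall s, J s ->
            md F s = mkM (m12 (F s)) (k s * m11 (F s)) (m22 (F s)) (k s * m21 (F s))).
  { intros s Hs. rewrite (md_eq_mmul_logd F s (Hdet s Hs)), (Hlogd s Hs). mat2_ring. }
  assert (Hvel : forall s, J s -> vd (fun u => col1 (F u)) s = (m12 (F s), m22 (F s))).
  { intros s Hs. change ((m11 (md F s), m21 (md F s)) = (m12 (F s), m22 (F s))).
    rewrite (Hmd s Hs). reflexivity. }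
  assert (Hacc : forall s, J s ->
            vd (vd (fun u => col1 (F u))) s = (k s * m11 (F s), k s * m21 (F s))).
  { intros s Hs. rewrite (vd_ext _ (fun u => (m12 (F u), m22 (F u))) s Hvel Hs).
    change ((m12 (md F s), m22 (md F s)) = (k s * m11 (F s), k s * m21 (F s))).
    rewrite (Hmd s Hs). reflexivity. }
  destruct HF as (h1 & _ & h3 & _).
  split; [|split].
  - split; [split; [exact h1 | exact h3]|].
    intros t Ht. pose proof (Hdet t Ht) as D. unfold mdet in D.
    rewrite (Hvel t Ht). unfold col1, vdet; cbn [fst snd]. split.
    + intros E; injection E; intros E1 E2. rewrite E1, E2 in D. lra.
    + lra.
  - intros t Ht. pose proof (Hdet t Ht) as D. unfold mdet in D.
    rewrite (Hvel t Ht). unfold col1, vdet; cbn [fst snd]. lra.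
  - intros t Ht. split.
    + unfold ca_frame. rewrite (Hvel t Ht). apply Mat2_eq; reflexivity.
    + pose proof (Hdet t Ht) as D. unfold mdet in D.
      unfold ca_curv. rewrite (Hvel t Ht), (Hacc t Ht). unfold vdet; cbn [fst snd].
      transitivity (k t * (m11 (F t) * m22 (F t) - m12 (F t) * m21 (F t))); [ring|].
      rewrite D. ring.
Qed.

End CentralAffineOnOpen.

(* [gamma^(i) = sl2_act Fp Fm (jet_i)] for a null curve [gamma] with spinor frame [(Fp, Fm)]. *)
Definition jet1 : Mat2 := mkM 0 2 0 0.
Definition jet2 : Mat2 := mkM (-2) 0 0 2.
Definition jet3 (k : R) : Mat2 := mkM 0 (4 * k) (-4) 0.

Lemma inf_act_jets_iff (A B : Mat2) (k : R) :
  (mtrace A = 0 /\ mtrace B = 0 /\ inf_act A B Umat = jet1 /\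
   inf_act A B jet1 = jet2 /\ inf_act A B jet2 = jet3 k)
  <-> (A = ca_gen (k + 1) /\ B = ca_gen (k - 1)).
Proof.
  split.
  - destruct A as [a1 a2 a3 a4], B as [b1 b2 b3 b4].
    unfold mtrace, inf_act, madd, mmul, madj, Umat, jet1, jet2, jet3; cbn [m11 m12 m21 m22].
    intros (TA & TB & E0 & E1 & E2).
    injection E0; injection E1; injection E2; intros.
    unfold ca_gen; split; apply Mat2_eq; cbn [m11 m12 m21 m22]; lra.
  - intros [-> ->]. unfold mtrace, ca_gen; cbn [m11 m22].
    repeat split; try ring; unfold inf_act, jet1, jet2, jet3; mat2_ring.
Qed.

Lemma sqrt2_sqr : sqrt 2 * sqrt 2 = 2.
Proof. apply sqrt_sqrt; lra. Qed.

Lemma inv_sqrt2 : / sqrt 2 = sqrt 2 / 2.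
Proof. pose proof Rlt_sqrt2_0. rewrite <- sqrt2_sqr at 3. field. lra. Qed.

Lemma P2_jet1 : P2 = mscal (/ sqrt 2) jet1.
Proof. unfold P2, mscal, jet1; apply Mat2_eq; cbn [m11 m12 m21 m22]; rewrite ?inv_sqrt2; field. Qed.

Lemma P3_jet2 : P3 = mscal (/ 2) jet2.
Proof. unfold P3, mscal, jet2; apply Mat2_eq; cbn [m11 m12 m21 m22]; field. Qed.

Lemma P4_jets (k : R) :
  P4 = madd (mscal (/ sqrt 2 * k) jet1) (mscal (- / (2 * sqrt 2)) (jet3 k)).
Proof.
  pose proof Rlt_sqrt2_0.
  unfold P4, madd, mscal, jet1, jet3; apply Mat2_eq; cbn [m11 m12 m21 m22];
    rewrite ?Rinv_mult, ?inv_sqrt2; field.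
Qed.

Lemma spinor_frame_eqs_iff (g : R -> Mat2) (P Q : Mat2) (t : R) :
  mdet Q = 1 ->
  (g t = mmul P (minv Q) /\ Tvec g t = mmul (mmul P P2) (minv Q) /\
   Nvec g t = mmul (mmul P P3) (minv Q) /\ Bvec g t = mmul (mmul P P4) (minv Q))
  <->
  (g t = sl2_act P Q Umat /\ md g t = sl2_act P Q jet1 /\ md (md g) t = sl2_act P Q jet2 /\
   md (md (md g)) t = sl2_act P Q (jet3 (bending g t))).
Proof.
  intros HQ. rewrite !mmul_minv_SL2 by exact HQ.
  replace (mmul P (minv Q)) with (sl2_act P Q Umat)
    by (unfold sl2_act; rewrite mmul_Umat_r, minv_SL2; auto).
  unfold Tvec, Nvec, Bvec.
  rewrite P2_jet1, P3_jet2, (P4_jets (bending g t)), !sl2_act_madd, !sl2_act_mscal.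
  assert (Hs2 : / sqrt 2 <> 0) by (apply Rinv_neq_0_compat, sqrt2_neq_0).
  assert (Hs22 : - / (2 * sqrt 2) <> 0).
  { apply Ropp_neq_0_compat, Rinv_neq_0_compat, Rmult_integral_contrapositive.
    split; [lra | apply sqrt2_neq_0]. }
  split.
  - intros (E0 & ET & EN & EB).
    apply mscal_inj in ET; [|exact Hs2]. apply mscal_inj in EN; [|lra].
    rewrite ET in EB. apply madd_cancel_l, mscal_inj in EB; [|exact Hs22].
    repeat split; assumption.
  - intros (E0 & E1 & E2 & E3). rewrite E1, E2, E3. repeat split; assumption.
Qed.

Lemma bending_of_jet3 (g : R -> Mat2) (P Q : Mat2) (k t : R) :
  mdet P = 1 -> mdet Q = 1 -> md (md (md g)) t = sl2_act P Q (jet3 k) -> bending g t = k.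
Proof.
  intros HP HQ E. unfold bending. rewrite E, ip_self, mdet_sl2_act, HP, HQ.
  unfold mdet, jet3; cbn [m11 m12 m21 m22]. field.
Qed.

(* With [S = sl2_act P Q 1], [sl2_act P Q jet1 = S N] for a nilpotent [N] built from the
   first column [(-v, u)] of [Q]; the determinant of the future-directedness condition is
   then a sum of squares plus [det S * (u^2 + v^2)]. *)
Lemma future_directed_sl2_act (P Q : Mat2) :
  mdet P = 1 -> mdet Q = 1 ->
  ip Umat (sl2_act P Q Umat) * ip Vmat (sl2_act P Q jet1)
  - ip Umat (sl2_act P Q jet1) * ip Vmat (sl2_act P Q Umat) > 0.
Proof.
  intros HP HQ.
  set (u := m21 Q). set (v := - m11 Q).
  set (N := mkM (2*u*v) (2*v*v) (-2*u*u) (-2*u*v)).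
  assert (EN : sl2_act P Q jet1 = mmul (sl2_act P Q Umat) N).
  { transitivity (mscal (mdet Q) (sl2_act P Q jet1)); [rewrite HQ; symmetry; apply mscal_1|].
    unfold N, u, v, mdet; mat2_ring. }
  assert (HS : mdet (sl2_act P Q Umat) = 1).
  { rewrite mdet_sl2_act, HP, HQ. unfold mdet, Umat; cbn [m11 m12 m21 m22]. ring. }
  assert (Huv : u * u + v * v > 0).
  { unfold u, v. destruct Q as [q1 q2 q3 q4]; unfold mdet in HQ; cbn [m11 m12 m21 m22] in *.
    destruct (Req_dec q1 0); destruct (Req_dec q3 0); nra. }
  rewrite EN. clearbody u v. destruct (sl2_act P Q Umat) as [a b c d].
  unfold mdet in HS; cbn [m11 m12 m21 m22] in HS.
  assert (F : ip Umat (mkM a b c d) * ip Vmat (mmul (mkM a b c d) N)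
              - ip Umat (mmul (mkM a b c d) N) * ip Vmat (mkM a b c d)
              = / 2 * ((a*v - b*u)^2 + (c*v - d*u)^2 + (a*d - b*c) * (u*u + v*v))).
  { unfold N, ip, qform, mdet, madd, mmul, Umat, Vmat; cbn [m11 m12 m21 m22]. field. }
  rewrite F, HS. apply Rmult_gt_0_compat; [lra|].
  pose proof (pow2_ge_0 (a*v - b*u)). pose proof (pow2_ge_0 (c*v - d*u)). nra.
Qed.

Lemma std_null_curve_of_jets (J : R -> Prop) (g P Q : R -> Mat2) :
  msmooth_on J g ->
  (forall s, J s -> mdet (P s) = 1 /\ mdet (Q s) = 1 /\ g s = sl2_act (P s) (Q s) Umat /\
     md g s = sl2_act (P s) (Q s) jet1 /\ md (md g) s = sl2_act (P s) (Q s) jet2) ->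
  std_null_curve J g.
Proof.
  intros Hg Hjets.
  split; [split; [exact Hg|] | split; [|split]]; intros t Ht;
    destruct (Hjets t Ht) as (HP & HQ & E0 & E1 & E2).
  - split; [|split].
    + unfold in_AdS. rewrite E0, mdet_sl2_act, HP, HQ. unfold mdet, Umat; cbn. ring.
    + rewrite E1, <- (sl2_act_mzero (P t) (Q t)). intros E.
      apply sl2_act_inj, (f_equal m12) in E; [|assumption..].
      unfold jet1, mzero in E; cbn [m12] in E. lra.
    + rewrite E1, ip_self, mdet_sl2_act, HP, HQ. unfold mdet, jet1; cbn [m11 m12 m21 m22]. ring.
  - rewrite E0, E1. apply future_directed_sl2_act; assumption.
  - intros x y E. rewrite E1, E2, <- !sl2_act_mscal, <- sl2_act_madd in E.
    rewrite <- (sl2_act_mzero (P t) (Q t)) in E. apply sl2_act_inj in E; [|assumption..].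
    pose proof (f_equal m11 E) as E11. pose proof (f_equal m12 E) as E12.
    unfold madd, mscal, jet1, jet2, mzero in E11, E12; cbn [m11 m12] in E11, E12. lra.
  - rewrite E2, ip_self, mdet_sl2_act, HP, HQ. unfold mdet, jet2; cbn [m11 m12 m21 m22]. ring.
Qed.

Section SpinorFramesOnOpen.

Variable J : R -> Prop.
Hypothesis J_open : open J.

Lemma logd_spinor_frame (g Fp Fm : R -> Mat2) (t : R) :
  spinor_frame J g Fp Fm -> J t ->
  logd Fp t = ca_gen (bending g t + 1) /\ logd Fm t = ca_gen (bending g t - 1).
Proof.
  intros (HP & HQ & Hframe) Ht.
  assert (Hjets : forall s, J s ->
    mdet (Fp s) = 1 /\ mdet (Fm s) = 1 /\ g s = sl2_act (Fp s) (Fm s) Umat /\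
    md g s = sl2_act (Fp s) (Fm s) jet1 /\ md (md g) s = sl2_act (Fp s) (Fm s) jet2 /\
    md (md (md g)) s = sl2_act (Fp s) (Fm s) (jet3 (bending g s))).
  { intros s Hs. destruct (Hframe s Hs) as (dP & dQ & Eqs).
    split; [exact dP | split; [exact dQ | apply spinor_frame_eqs_iff; assumption]]. }
  assert (dP : forall s, J s -> mdet (Fp s) = 1) by (intros s Hs; apply (Hjets s Hs)).
  assert (dQ : forall s, J s -> mdet (Fm s) = 1) by (intros s Hs; apply (Hjets s Hs)).
  assert (Hinf : forall (G : R -> Mat2) (C D : Mat2),
            (forall s, J s -> G s = sl2_act (Fp s) (Fm s) C) ->
            md G t = sl2_act (Fp t) (Fm t) D -> inf_act (logd Fp t) (logd Fm t) C = D).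
  { intros G C D HG E. apply (sl2_act_inj (Fp t) (Fm t)); auto.
    rewrite <- E. symmetry. apply (md_sl2_act_on J J_open); auto. }
  destruct (Hjets t Ht) as (_ & _ & _ & E1 & E2 & E3).
  apply inf_act_jets_iff. repeat split.
  - apply (mtrace_logd J J_open); auto.
  - apply (mtrace_logd J J_open); auto.
  - apply (Hinf g); [intros s Hs; apply (Hjets s Hs) | exact E1].
  - apply (Hinf (md g)); [intros s Hs; apply (Hjets s Hs) | exact E2].
  - apply (Hinf (md (md g))); [intros s Hs; apply (Hjets s Hs) | exact E3].
Qed.

Lemma jets_of_inf_act (P Q g : R -> Mat2) (k : R -> R) :
  msmooth_on J P -> msmooth_on J Q ->
  (forall s, J s -> mdet (P s) = 1) -> (forall s, J s -> mdet (Q s) = 1) ->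
  (forall s, J s -> g s = sl2_act (P s) (Q s) Umat) ->
  (forall s, J s ->
     inf_act (logd P s) (logd Q s) Umat = jet1 /\ inf_act (logd P s) (logd Q s) jet1 = jet2 /\
     inf_act (logd P s) (logd Q s) jet2 = jet3 (k s)) ->
  forall t, J t ->
    md g t = sl2_act (P t) (Q t) jet1 /\ md (md g) t = sl2_act (P t) (Q t) jet2 /\
    md (md (md g)) t = sl2_act (P t) (Q t) (jet3 (k t)).
Proof.
  intros HP HQ dP dQ E0 Hinf.
  assert (Hmd : forall (G : R -> Mat2) (C : Mat2) (t : R),
            (forall s, J s -> G s = sl2_act (P s) (Q s) C) -> J t ->
            md G t = sl2_act (P t) (Q t) (inf_act (logd P t) (logd Q t) C))
    by (intros; apply (md_sl2_act_on J J_open); auto).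
  assert (E1 : forall s, J s -> md g s = sl2_act (P s) (Q s) jet1).
  { intros s Hs. rewrite (Hmd _ _ s E0 Hs). f_equal. apply Hinf, Hs. }
  assert (E2 : forall s, J s -> md (md g) s = sl2_act (P s) (Q s) jet2).
  { intros s Hs. rewrite (Hmd _ _ s E1 Hs). f_equal. apply Hinf, Hs. }
  intros t Ht. split; [apply E1, Ht | split; [apply E2, Ht |]].
  rewrite (Hmd _ _ t E2 Ht). f_equal. apply Hinf, Ht.
Qed.

Lemma null_curve_of_cousins (etap etam : R -> R * R) :
  let g := fun t => mmul (ca_frame etap t) (minv (ca_frame etam t)) in
  cousins J etap etam ->
  std_null_curve J g /\
  (forall t, J t -> bending g t = (ca_curv etap t + ca_curv etam t) / 2) /\
  spinor_frame J g (ca_frame etap) (ca_frame etam).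
Proof.
  intros g (Sp & Sm & Ap & Am & Hcurv).
  set (P := ca_frame etap). set (Q := ca_frame etam).
  set (k := fun t => (ca_curv etap t + ca_curv etam t) / 2).
  assert (HP : msmooth_on J P) by (apply msmooth_on_ca_frame; exact Sp).
  assert (HQ : msmooth_on J Q) by (apply msmooth_on_ca_frame; exact Sm).
  assert (dP : forall s, J s -> mdet (P s) = 1)
    by (intros s Hs; unfold P; rewrite mdet_ca_frame; auto).
  assert (dQ : forall s, J s -> mdet (Q s) = 1)
    by (intros s Hs; unfold Q; rewrite mdet_ca_frame; auto).
  assert (E0 : forall s, J s -> g s = sl2_act (P s) (Q s) Umat).
  { intros s Hs. unfold g, sl2_act. rewrite mmul_Umat_r, minv_SL2; auto. }
  assert (Hjets : forall t, J t ->
    md g t = sl2_act (P t) (Q t) jet1 /\ md (md g) t = sl2_act (P t) (Q t) jet2 /\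
    md (md (md g)) t = sl2_act (P t) (Q t) (jet3 (k t))).
  { apply (jets_of_inf_act P Q g k HP HQ dP dQ E0). intros s Hs.
    refine (proj2 (proj2 (proj2 (inf_act_jets_iff _ _ (k s)) _))).
    unfold P, Q. rewrite !(logd_ca_frame J J_open) by assumption.
    pose proof (Hcurv s Hs). unfold k. split; f_equal; lra. }
  assert (Hbend : forall s, J s -> bending g s = k s).
  { intros s Hs. apply (bending_of_jet3 g (P s) (Q s)); auto. apply Hjets, Hs. }
  split; [|split; [exact Hbend|]].
  - apply (std_null_curve_of_jets J g P Q).
    + apply (msmooth_on_ext J J_open (fun s => mmul (P s) (madj (Q s)))).
      * intros s Hs. unfold g. rewrite minv_SL2; auto.
      * apply msmooth_on_mmul, msmooth_on_madj; assumption.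
    + intros s Hs. destruct (Hjets s Hs) as (E1 & E2 & _). repeat split; auto.
  - split; [exact HP | split; [exact HQ|]].
    intros t Ht. split; [exact (dP t Ht) | split; [exact (dQ t Ht)|]].
    apply (spinor_frame_eqs_iff g (P t) (Q t) t (dQ t Ht)). rewrite Hbend by exact Ht.
    destruct (Hjets t Ht) as (E1 & E2 & E3). repeat split; auto.
Qed.

End SpinorFramesOnOpen.

Theorem mainTheorem1 (a b : Rbar) (Hab : Rbar_lt a b) :
  (forall g Fp Fm : R -> Mat2,
     std_null_curve (in_interval a b) g ->
     spinor_frame (in_interval a b) g Fp Fm ->
     star_shaped (in_interval a b) (fun t => col1 (Fp t)) /\
     star_shaped (in_interval a b) (fun t => col1 (Fm t)) /\
     ca_arclength (in_interval a b) (fun t => col1 (Fp t)) /\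
     ca_arclength (in_interval a b) (fun t => col1 (Fm t)) /\
     (forall t, in_interval a b t ->
        ca_frame (fun s => col1 (Fp s)) t = Fp t /\
        ca_frame (fun s => col1 (Fm s)) t = Fm t /\
        ca_curv (fun s => col1 (Fp s)) t = bending g t + 1 /\
        ca_curv (fun s => col1 (Fm s)) t = bending g t - 1) /\
     cousins (in_interval a b) (fun t => col1 (Fp t)) (fun t => col1 (Fm t)))
  /\
  (forall etap etam : R -> R * R,
     cousins (in_interval a b) etap etam ->
     std_null_curve (in_interval a b)
       (fun t => mmul (ca_frame etap t) (minv (ca_frame etam t))) /\
     (forall t, in_interval a b t ->
        bending (fun s => mmul (ca_frame etap s) (minv (ca_frame etam s))) t
        = (ca_curv etap t + ca_curv etam t) / 2) /\
     spinor_frame (in_interval a b)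
       (fun t => mmul (ca_frame etap t) (minv (ca_frame etam t)))
       (ca_frame etap) (ca_frame etam)).
Proof.
  pose proof (open_in_interval a b) as HJ.
  split.
  - intros g Fp Fm _ Hframe.
    assert (Hlogd : forall s, in_interval a b s ->
      logd Fp s = ca_gen (bending g s + 1) /\ logd Fm s = ca_gen (bending g s - 1))
      by (intros s Hs; apply (logd_spinor_frame _ HJ); assumption).
    destruct Hframe as (HP & HQ & Hpt).
    assert (dP : forall s, in_interval a b s -> mdet (Fp s) = 1) by (intros s Hs; apply Hpt, Hs).
    assert (dQ : forall s, in_interval a b s -> mdet (Fm s) = 1) by (intros s Hs; apply Hpt, Hs).
    destruct (ca_curve_of_frame _ HJ Fp _ HP dP (fun s Hs => proj1 (Hlogd s Hs)))
      as (SP & AP & FP).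
    destruct (ca_curve_of_frame _ HJ Fm _ HQ dQ (fun s Hs => proj2 (Hlogd s Hs)))
      as (SQ & AQ & FQ).
    assert (Hcurv : forall t, in_interval a b t ->
      ca_frame (fun s => col1 (Fp s)) t = Fp t /\ ca_frame (fun s => col1 (Fm s)) t = Fm t /\
      ca_curv (fun s => col1 (Fp s)) t = bending g t + 1 /\
      ca_curv (fun s => col1 (Fm s)) t = bending g t - 1).
    { intros t Ht. destruct (FP t Ht), (FQ t Ht). repeat split; assumption. }
    do 5 (split; [assumption|]).
    do 4 (split; [assumption|]).
    intros t Ht. destruct (Hcurv t Ht) as (_ & _ & -> & ->). field.
  - intros etap etam. apply null_curve_of_cousins, HJ.
Qed.
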